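(* For a plane forest $\overline{\mathcal F}$ with $n$ vertices, let $\iota(\overline{\mathcal F})$ be the ordered forest obtained by numbering its vertices $1,\dots,n$ in order of first visit in a left depth-first (preorder) traversal of the trees from left to right. Then the linear map $\iota:\mathbf H_{NCK}\to\mathbf H_o$ is an injective morphism of Hopf algebras (equivalently, $\overline{\mathcal F}\mapsto S^{\iota(\overline{\mathcal F})}$ is a Hopf embedding of $\mathbf H_{NCK}$ into the polynomial realization of $\mathbf H_o$).
   Context: A plane forest is a finite sequence of plane trees (rooted trees in which the children of each vertex are linearly ordered). The noncommutative Connes–Kreimer algebra $\mathbf H_{NCK}$ has basis the plane forests, product = concatenation of sequences, and coproduct $\Delta(\overline{\mathcal F})=\sum_V\mathrm{Roo}_V\overline{\mathcal F}\otimes\mathrm{Lea}_V\overline{\mathcal F}$ over admissible cuts $V$ (sets of vertices no two of which are in ancestor/descendant relation), where $\mathrm{Lea}_V$ is the plane subforest formed by $V$ and its descendants and $\mathrm{Roo}_V$ the plane subforest formed by the remaining vertices, with inherited planar orders. An ordered forest on $n$ vertices is a rooted forest with vertex set $[n]$ (labels unrelated to the structure); $\mathbf H_o$ has basis the ordered forests, product $\mathcal F\mathcal G$ = disjoint union with labels of $\mathcal G$ shifted by the number of vertices of $\mathcal F$, and coproduct $\Delta(\mathcal F)=\sum_V\mathrm{Roo}_V\mathcal F\otimes\mathrm{Lea}_V\mathcal F$ over admissible cuts, where $\mathrm{Lea}_V\mathcal F$ (resp. $\mathrm{Roo}_V\mathcal F$) is the induced subforest on $V$ and its descendants (resp. on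 the complement), relabelled by the increasing bijection onto $[k]$. $S^{\mathcal F}$ denotes the polynomial realization of $\mathcal F$ (sum of $\mathcal F$-compatible words over $\{a_{ij}:0\le i<j\}$ with $a_{ij}\prec a_{kl}$ iff $j=k$, compatibility meaning $w_k\prec w_l$ whenever $k$ is the parent of $l$). *)

From HB Require Import structures.
From mathcomp Require Import all_boot all_order all_algebra.
Set Implicit Arguments. Unset Strict Implicit. Unset Printing Implicit Defensive.
Import GRing.Theory.
Local Open Scope ring_scope.

Inductive ptree := PNode of seq ptree.
Definition pforest := seq ptree.

Fixpoint ptree_enc (t : ptree) : GenTree.tree unit :=
  let: PNode ts := t in GenTree.Node 0 (map ptree_enc ts).

Fixpoint ptree_dec (g : GenTree.tree unit) : option ptree :=
  match g with
  | GenTree.Leaf _ => None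
  | GenTree.Node _ gs =>
    omap PNode
      ((fix decs (gs : seq (GenTree.tree unit)) : option (seq ptree) :=
          match gs with
          | [::] => Some [::]
          | g :: gs' =>
            match ptree_dec g, decs gs' with
            | Some t, Some ts => Some (t :: ts)
            | _, _ => None
            end
          end) gs)
  end.

Lemma ptree_encK : pcancel ptree_enc ptree_dec.
Proof.
rewrite /pcancel; fix IH 1; case=> ts /=.
suff -> : (fix decs (gs : seq (GenTree.tree unit)) : option (seq ptree) :=
          match gs with
          | [::] => Some [::]
          | g :: gs' =>
            match ptree_dec g, decs gs' with
            | Some t, Some ts => Some (t :: ts)
            | _, _ => None
            end
          end) (map ptree_enc ts) = Some ts by [].
move: ts; fix IHs 1; case=> [|u us] //=.
by rewrite IH IHs.
Qed.

HB.instance Definition _ := Equality.copy ptree (pcan_type ptree_encK).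

(* Vertices of a plane forest are addressed by paths: [:: i] is the root of
   the i-th tree, i :: j :: p the vertex at path j :: p inside ... etc.
   (p ++ [:: k] is the k-th child of the vertex p).  [pverts f] lists the
   vertices of f in left depth-first (preorder) order, trees left to right. *)
Fixpoint tverts (t : ptree) : seq (seq nat) :=
  let: PNode ts := t in
  [::] :: (fix fv (i : nat) (ts : seq ptree) : seq (seq nat) :=
             if ts is u :: us then map (cons i) (tverts u) ++ fv i.+1 us
             else [::]) 0%N ts.

Definition pverts (f : pforest) : seq (seq nat) :=
  flatten [seq map (cons i.1) (tverts i.2) | i <- zip (iota 0 (size f)) f].

(* The plane subforest induced on the set of vertices satisfying [keep]
   (paths relative to the tree), with inherited planar order: a deleted
   vertex is replaced, in its place, by the induced subforest of its
   children. *)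
Fixpoint tinduced (t : ptree) (keep : seq nat -> bool) : pforest :=
  let: PNode ts := t in
  let kids :=
    (fix fi (i : nat) (ts : seq ptree) : pforest :=
       if ts is u :: us then tinduced u (fun p => keep (i :: p)) ++ fi i.+1 us
       else [::]) 0%N ts in
  if keep [::] then [:: PNode kids] else kids.

Definition pinduced (f : pforest) (keep : seq nat -> bool) : pforest :=
  flatten [seq tinduced i.2 (fun p => keep (i.1 :: p))
          | i <- zip (iota 0 (size f)) f].

Fixpoint bitseqs (n : nat) : seq bitseq :=
  if n is n'.+1 then [seq b :: s | b <- [:: true; false], s <- bitseqs n']
  else [:: [::]].

(* admissible cut of a plane forest: no two of its vertices are in
   ancestor/descendant relation (v proper ancestor of w iff v is a proper
   prefix of w) *)
Definition p_admissible (V : seq (seq nat)) : bool :=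
  all (fun v => all (fun w => ~~ (prefix v w && (v != w))) V) V.

(* Lea_V : V and its descendants;  Roo_V : the remaining vertices *)
Definition p_inLea (V : seq (seq nat)) (p : seq nat) : bool :=
  has (fun v => prefix v p) V.

(* coproduct of H_NCK on a basis element: the list (multiset) of the
   terms Roo_V F (x) Lea_V F over all admissible cuts V *)
Definition pcoprod (f : pforest) : seq (pforest * pforest) :=
  [seq (pinduced f (fun p => ~~ p_inLea V p), pinduced f (p_inLea V))
  | V <- [seq mask m (pverts f) | m <- bitseqs (size (pverts f))]
  & p_admissible V].

Definition pprod (f g : pforest) : pforest := f ++ g.
Definition pcounit (f : pforest) : bool := f == [::].

(* An ordered forest on n vertices is encoded by its parent list p of size n:
   the vertices are 0, ..., n-1 (standing for the labels 1, ..., n), and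
   nth None p i is Some j if j is the parent of i, None if i is a root. *)
Definition oforest := seq (option nat).

Definition oparent (p : oforest) (o : option nat) : option nat :=
  obind (fun j => nth None p j) o.

Definition oanc (p : oforest) (a b : nat) : bool :=
  has (fun k => iter k (oparent p) (Some b) == Some a) (iota 1 (size p)).

Definition ovalid (p : oforest) : bool :=
  all (fun o => if o is Some j then (j < size p)%N else true) p &&
  all (fun i => iter (size p) (oparent p) (Some i) == None) (iota 0 (size p)).

Definition oprod (p q : oforest) : oforest :=
  p ++ map (omap (addn (size p))) q.
Definition ocounit (p : oforest) : bool := p == [::].

(* induced subforest on the vertex set S, relabelled by the increasing
   bijection S -> {0..|S|-1} *)
Definition oinduced (p : oforest) (S : pred nat) : oforest :=
  [seq match nth None p j with
       | Some k => if S k then Some (count S (iota 0 k)) else None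
       | None => None
       end
  | j <- iota 0 (size p) & S j].

(* admissible cut given by its indicator bit sequence m *)
Definition o_admissible (p : oforest) (m : bitseq) : bool :=
  all (fun i => all (fun j => ~~ (nth false m i && nth false m j && oanc p i j))
                    (iota 0 (size p))) (iota 0 (size p)).

Definition o_inLea (p : oforest) (m : bitseq) (i : nat) : bool :=
  nth false m i || has (fun a => nth false m a && oanc p a i) (iota 0 (size p)).

Definition ocoprod (p : oforest) : seq (oforest * oforest) :=
  [seq (oinduced p (predC (o_inLea p m)), oinduced p (o_inLea p m))
  | m <- bitseqs (size p) & o_admissible p m].

Definition iota_pf (f : pforest) : oforest :=
  let vs := pverts f in
  [seq if (1 < size v)%N then Some (index (take (size v).-1 v) vs) else None
  | v <- vs].

(* An element of the free K-module on the basis B is represented by a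
   finite formal sum, i.e. a list of (coefficient, basis element); two such
   represent the same vector iff all their coefficients agree. *)
Definition lc (K : Type) (B : Type) := seq (K * B).

Definition coef (K : nmodType) (B : eqType) (v : lc K B) (b : B) : K :=
  \sum_(x <- v | x.2 == b) x.1.

Definition lmap (K A B : Type) (f : A -> B) (v : lc K A) : lc K B :=
  [seq (x.1, f x.2) | x <- v].

Definition lmul (K : pzSemiRingType) (B : Type) (mul : B -> B -> B)
  (v w : lc K B) : lc K B :=
  [seq (x.1 * y.1, mul x.2 y.2) | x <- v, y <- w].

Definition lunit (K : pzSemiRingType) (B : Type) (e : B) : lc K B := [:: (1, e)].

Definition lcoprod (K B : Type) (D : B -> seq (B * B)) (v : lc K B)
  : lc K (B * B) :=
  [seq (x.1, y) | x <- v, y <- D x.2].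

Definition lcounit (K : pzSemiRingType) (B : Type) (eps : B -> bool)
  (v : lc K B) : K :=
  \sum_(x <- v) x.1 * (eps x.2)%:R.

Definition tensor_map (A B : Type) (f : A -> B) (x : A * A) : B * B :=
  (f x.1, f x.2).

From HB Require Import structures.
From mathcomp Require Import all_boot all_order all_algebra zify.
Set Implicit Arguments. Unset Strict Implicit. Unset Printing Implicit Defensive.

(* The vertices of a plane forest are addressed by paths and listed in preorder
   by [pverts]; [iota_pf f] labels a vertex by its position in that list, and
   the parent of a vertex is its path with the last entry dropped.  Hence the
   ancestors of a vertex of [iota_pf f] are exactly its proper prefixes, so the
   admissible cuts of [f] and of [iota_pf f] correspond bit by bit, and so do
   their Lea and Roo parts.  Both parts are induced on vertex sets which, with a
   vertex and one of its ancestors, contain everything in between; on such a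
   set the induced plane forest lists the kept vertices in preorder with the
   parent relation restricted, which is the relabelled induced ordered forest.
   Concatenation shifts the indices of the roots, which is the shifted disjoint
   union, and [iota_pf] is injective because the second root of [iota_pf f]
   marks the end of the first tree. *)

Lemma proper_prefixP (T : eqType) (u v : seq T) : u != [::] ->
  reflect (exists2 k, (0 < k < size v)%N & take (size v - k) v = u)
          (prefix u v && (u != v)).
Proof.
move=> u_nonnil; apply: (iffP andP) => [[pre_uv neq_uv]|[k /andP[k_gt0 lt_kv] <-]].
  have lt_uv : (size u < size v)%N.
    rewrite ltn_neqAle size_prefix // andbT; apply: contra neq_uv => /eqP eq_sz.
    by move: pre_uv; rewrite prefixE eq_sz take_size eq_sym.
  have u_gt0 : (0 < size u)%N by rewrite lt0n size_eq0.
  exists (size v - size u)%N; first by lia.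
  by rewrite subKn ?(ltnW lt_uv) //; apply/eqP; rewrite -prefixE.
split; first exact: prefix_take.
by apply/eqP => /(congr1 size); rewrite size_takel ?leq_subr //; lia.
Qed.

Lemma index_map_in (T U : eqType) (h : T -> U) (s : seq T) x :
  uniq (map h s) -> x \in s -> index (h x) (map h s) = index x s.
Proof.
elim: s => //= y s IH /andP[hy_notin uniq_hs]; rewrite inE.
have [-> _|neq_xy /= x_in] := eqVneq x y; first by rewrite !eqxx.
rewrite IH //; case: eqVneq => // eq_h.
by move: hy_notin; rewrite eq_h map_f.
Qed.

Lemma index_filter (T : eqType) (a : pred T) (s : seq T) x :
  a x -> index x (filter a s) = count a (take (index x s) s).
Proof.
move=> ax; elim: s => //= y s IH.
have [->|neq_yx] := eqVneq y x; first by rewrite ax /= eqxx.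
by case ay: (a y); rewrite /= ?(negbTE neq_yx) IH ay.
Qed.

Definition shift_root (k : nat) (v : seq nat) : seq nat :=
  if v is i :: w then (k + i)%N :: w else [::].

(* [pverts] and [pinduced] with the trees numbered from [j] on; these are the
   inner loops of [tverts] and [tinduced]. *)
Definition pverts_from (j : nat) (g : pforest) : seq (seq nat) :=
  flatten [seq map (cons i.1) (tverts i.2) | i <- zip (iota j (size g)) g].

Definition pinduced_from (j : nat) (g : pforest) (keep : seq nat -> bool)
    : pforest :=
  flatten [seq tinduced i.2 (fun p => keep (i.1 :: p))
          | i <- zip (iota j (size g)) g].

Lemma pverts_from_cons j t g :
  pverts_from j (t :: g) = map (cons j) (tverts t) ++ pverts_from j.+1 g.
Proof. by []. Qed.

Lemma pinduced_from_cons j t g keep : pinduced_from j (t :: g) keep =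
  tinduced t (fun p => keep (j :: p)) ++ pinduced_from j.+1 g keep.
Proof. by []. Qed.

Lemma pverts_from_shift k j g :
  pverts_from (k + j) g = map (shift_root k) (pverts_from j g).
Proof.
elim: g j => [|t g IH] j //.
by rewrite !pverts_from_cons map_cat -addnS IH -map_comp.
Qed.

Lemma pinduced_from_shift k j g keep :
  pinduced_from (k + j) g keep =
  pinduced_from j g (fun p => keep (shift_root k p)).
Proof.
by elim: g j => [|t g IH] j //; rewrite !pinduced_from_cons -addnS IH.
Qed.

Lemma pverts_from_cat j f g :
  pverts_from j (f ++ g) = pverts_from j f ++ pverts_from (j + size f) g.
Proof.
elim: f j => [|t f IH] j /=; first by rewrite addn0.
by rewrite !pverts_from_cons IH catA addSnnS.
Qed.

Lemma tverts_node ts : tverts (PNode ts) = [::] :: pverts ts.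
Proof.
rewrite /=; congr cons; rewrite /pverts -/(pverts_from 0 ts).
by elim: ts 0%N => [|t ts IH] i //=; rewrite pverts_from_cons IH.
Qed.

Lemma tinduced_node ts keep : tinduced (PNode ts) keep =
  if keep [::] then [:: PNode (pinduced ts keep)] else pinduced ts keep.
Proof.
rewrite /= /pinduced -/(pinduced_from 0 ts keep).
suff -> : (fix fi (i : nat) (ts : seq ptree) : pforest :=
       if ts is u :: us then tinduced u (fun p => keep (i :: p)) ++ fi i.+1 us
       else [::]) 0%N ts = pinduced_from 0 ts keep by [].
by elim: ts 0%N => [|t ts IH] i //=; rewrite pinduced_from_cons IH.
Qed.

Lemma pverts_cons ts g : pverts (PNode ts :: g) =
  [:: 0%N] :: map (cons 0%N) (pverts ts) ++ map (shift_root 1) (pverts g).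
Proof.
rewrite /pverts -/(pverts_from 0 _) pverts_from_cons tverts_node.
by rewrite -/(pverts_from 0 _) -(pverts_from_shift 1 0).
Qed.

Lemma pinduced_cons ts g keep : pinduced (PNode ts :: g) keep =
  (if keep [:: 0%N] then [:: PNode (pinduced ts (fun p => keep (0%N :: p)))]
   else pinduced ts (fun p => keep (0%N :: p)))
  ++ pinduced g (fun p => keep (shift_root 1 p)).
Proof.
rewrite /pinduced -!/(pinduced_from 0 _ _) pinduced_from_cons tinduced_node.
by have := pinduced_from_shift 1 0 g keep; rewrite addn0 => ->.
Qed.

Lemma pverts_cat f g :
  pverts (f ++ g) = pverts f ++ map (shift_root (size f)) (pverts g).
Proof.
rewrite /pverts -!/(pverts_from 0 _) pverts_from_cat add0n.
by have := pverts_from_shift (size f) 0 g; rewrite addn0 => ->.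
Qed.

Lemma pforest_ind (P : pforest -> Prop) :
  P [::] -> (forall ts g, P ts -> P g -> P (PNode ts :: g)) -> forall f, P f.
Proof.
move=> P0 Pcons f; have [n] := ubnP (size (pverts f)); elim: n f => // n IH.
case=> [|[ts] g] //; rewrite pverts_cons /= size_cat !size_map ltnS => lt_n.
by apply: Pcons; apply: IH; apply: leq_ltn_trans lt_n; rewrite ?leq_addr ?leq_addl.
Qed.

Lemma shift_root_inj k : injective (shift_root k).
Proof. by move=> [|i v] [|j w] //= [/addnI -> ->]. Qed.

Lemma take_shift_root k m v : take m (shift_root k v) = shift_root k (take m v).
Proof. by case: v m => [|i v] [|m]. Qed.

Lemma pverts_root f v :
  v \in pverts f -> exists i w, v = i :: w /\ (i < size f)%N.
Proof.
elim/pforest_ind: f v => // ts g _ IHg v; rewrite pverts_cons inE mem_cat.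
case/or3P=> [/eqP->|/mapP[u _ ->]|/mapP[u /IHg[i [w [-> lt_i]]] ->]].
- by exists 0%N, [::].
- by exists 0%N, u.
- by exists (1 + i)%N, w; rewrite /= add1n ltnS.
Qed.

Lemma pverts_nonnil f v : v \in pverts f -> v != [::].
Proof. by case/pverts_root=> i [w [-> _]]. Qed.

Lemma mem_filter_pverts_nonnil (a : pred (seq nat)) f v :
  v \in filter a (pverts f) -> v != [::].
Proof. by rewrite mem_filter => /andP[_ /pverts_nonnil]. Qed.

Lemma pverts_eq_nil f : (pverts f == [::]) = (f == [::]).
Proof. by case: f => [|[ts] g]; rewrite ?pverts_cons. Qed.

Lemma pverts_uniq f : uniq (pverts f).
Proof.
have cons0_inj : injective (cons 0%N) by move=> x y [].
elim/pforest_ind: f => // ts g IHts IHg; rewrite pverts_cons cons_uniq cat_uniq.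
rewrite (map_inj_uniq (@shift_root_inj 1)) (map_inj_uniq cons0_inj) IHts IHg.
rewrite mem_cat negb_or andbT /= -andbA; apply/and3P; split.
- by apply/mapP=> -[u /pverts_root[i [w [-> _]]]].
- by apply/mapP=> -[[|i w] _].
- by apply/hasP=> -[_ /mapP[[|i w] /pverts_nonnil // _ ->] /mapP[u _]].
Qed.

Lemma mem_pverts_take f v m :
  v \in pverts f -> (0 < m)%N -> take m v \in pverts f.
Proof.
elim/pforest_ind: f v m => // ts g IHts IHg v [//|m] + _.
rewrite pverts_cons !inE !mem_cat.
case/or3P=> [/eqP->|/mapP[u u_in ->]|/mapP[u u_in ->]]; first by rewrite eqxx.
- case: m => [|m]; first by rewrite /= take0 eqxx.
  by rewrite /= map_f ?orbT ?IHts.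
- by rewrite take_shift_root map_f ?orbT ?IHg.
Qed.

Lemma size_le_pverts f v : v \in pverts f -> (size v <= size (pverts f))%N.
Proof.
move=> v_in; rewrite -(size_iota 1 (size v)) -(size_map (take^~ v)).
apply: uniq_leq_size.
  rewrite map_inj_in_uniq ?iota_uniq // => a b.
  rewrite !mem_iota !add1n !ltnS => /andP[_ le_a] /andP[_ le_b].
  by move=> /(congr1 size); rewrite !size_takel.
by move=> x /mapP[k]; rewrite mem_iota => /andP[k_gt0 _] ->; apply: mem_pverts_take.
Qed.

(** * Parents and ancestors in [iota_pf f] *)

Definition parent_path (v : seq nat) : option (seq nat) :=
  if (1 < size v)%N then Some (take (size v).-1 v) else None.

Lemma iota_pfE f :
  iota_pf f = [seq omap (index^~ (pverts f)) (parent_path v) | v <- pverts f].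
Proof. by apply: eq_map => v; rewrite /parent_path; case: ifP. Qed.

Lemma size_iota_pf f : size (iota_pf f) = size (pverts f).
Proof. by rewrite size_map. Qed.

Lemma parent_path_mem f v u :
  v \in pverts f -> parent_path v = Some u -> u \in pverts f.
Proof.
rewrite /parent_path; case: ifP => // lt1v v_in [<-].
by apply: mem_pverts_take; case: (size v) lt1v => [|[]].
Qed.

Lemma parent_path_nonnil v u : parent_path v = Some u -> u != [::].
Proof.
rewrite /parent_path; case: ifP => // lt1v [<-].
by rewrite -size_eq0 size_takel ?leq_pred // -lt0n -ltnS prednK // ltnW.
Qed.

Lemma nth_iota_pf f j : (j < size (pverts f))%N ->
  nth None (iota_pf f) j =
  omap (index^~ (pverts f)) (parent_path (nth [::] (pverts f) j)).
Proof. by move=> lt_j; rewrite iota_pfE (nth_map [::]). Qed.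

Lemma iter_oparent_iota_pf f v k : v \in pverts f ->
  iter k (oparent (iota_pf f)) (Some (index v (pverts f))) =
  if (k < size v)%N then Some (index (take (size v - k) v) (pverts f)) else None.
Proof.
move=> v_in; have v_nonnil := pverts_nonnil v_in.
elim: k => [|k IH]; first by rewrite subn0 take_size lt0n size_eq0 v_nonnil.
rewrite iterS IH; case: (ltnP k (size v)) => [lt_kv|le_vk]; last first.
  by rewrite ltnNge (leq_trans le_vk).
have take_in : take (size v - k) v \in pverts f.
  by apply: mem_pverts_take; rewrite ?subn_gt0.
rewrite /= nth_iota_pf ?index_mem // nth_index // /parent_path.
rewrite size_takel ?leq_subr // ltn_subRL addn1.
case: ltnP => // lt_k1v.
by rewrite take_takel -?subnS // leq_sub2l.
Qed.

Lemma oanc_iota_pf f i j :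
  (i < size (pverts f))%N -> (j < size (pverts f))%N ->
  oanc (iota_pf f) i j =
  prefix (nth [::] (pverts f) i) (nth [::] (pverts f) j) &&
  (nth [::] (pverts f) i != nth [::] (pverts f) j).
Proof.
move=> lt_i lt_j; set vs := pverts f.
set u := nth [::] vs i; set v := nth [::] vs j.
have u_in : u \in vs by apply: mem_nth.
have v_in : v \in vs by apply: mem_nth.
have -> : j = index v vs by rewrite index_uniq ?pverts_uniq.
rewrite /oanc size_iota_pf.
apply/hasP/(@proper_prefixP _ u v (pverts_nonnil u_in))
  => [[k]|[k /andP[k_gt0 lt_kv] eq_u]].
  rewrite mem_iota add1n ltnS => /andP[k_gt0 _].
  rewrite iter_oparent_iota_pf //; case: ifP => // lt_kv /eqP[eq_index].
  exists k; first by rewrite k_gt0.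
  apply: (index_inj [::] _ u_in); first by rewrite mem_pverts_take ?subn_gt0.
  by rewrite eq_index index_uniq ?pverts_uniq.
exists k.
  by rewrite mem_iota add1n ltnS k_gt0 (leq_trans (ltnW lt_kv)) ?size_le_pverts.
by rewrite iter_oparent_iota_pf // lt_kv eq_u index_uniq ?pverts_uniq.
Qed.

Lemma ovalid_iota_pf f : ovalid (iota_pf f).
Proof.
rewrite /ovalid size_iota_pf; apply/andP; split.
  apply/allP => o; rewrite iota_pfE => /mapP[v v_in ->].
  by case E: (parent_path v) => [u|] //=; rewrite index_mem (parent_path_mem v_in E).
apply/allP => i; rewrite mem_iota add0n => /andP[_ lt_i].
have v_in : nth [::] (pverts f) i \in pverts f by apply: mem_nth.
rewrite -{1}(index_uniq [::] lt_i (pverts_uniq f)).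
by rewrite iter_oparent_iota_pf // ltnNge size_le_pverts.
Qed.

(** * Products and injectivity *)

Lemma parent_path_shift k v :
  parent_path (shift_root k v) = omap (shift_root k) (parent_path v).
Proof.
rewrite /parent_path; have -> : size (shift_root k v) = size v by case: v.
by case: ifP; rewrite // take_shift_root.
Qed.

Lemma parent_path_cons x w : w != [::] ->
  parent_path (x :: w) = Some (x :: odflt [::] (parent_path w)).
Proof. by rewrite /parent_path; case: w => // a [|b w]. Qed.

Lemma iota_pf_cat f g : iota_pf (f ++ g) = oprod (iota_pf f) (iota_pf g).
Proof.
rewrite /oprod size_iota_pf !iota_pfE pverts_cat map_cat; congr (_ ++ _).
  apply/eq_in_map => v v_in; case E: (parent_path v) => [u|] //=.
  by rewrite index_cat (parent_path_mem v_in E).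
rewrite -!map_comp; apply/eq_in_map => w w_in /=.
rewrite parent_path_shift; case E: (parent_path w) => [u|] //=.
have [j [y [-> _]]] := pverts_root (parent_path_mem w_in E).
rewrite index_cat ifF ?(index_map (@shift_root_inj _)) //.
by apply/negP => /pverts_root[i [x [[<- _]]]]; rewrite ltnNge leq_addr.
Qed.

Definition under_root (o : option nat) : option nat :=
  Some (if o is Some j then j.+1 else 0%N).

Lemma under_root_inj : injective under_root.
Proof. by move=> [a|] [b|] //= [] // ->. Qed.

Lemma iota_pf_node ts :
  iota_pf [:: PNode ts] = None :: map under_root (iota_pf ts).
Proof.
have cons0_inj : injective (cons 0%N) by move=> x y [].
rewrite !iota_pfE pverts_cons /= cats0 -!map_comp; congr cons.
apply/eq_in_map => w w_in /=; rewrite parent_path_cons ?(pverts_nonnil w_in) //=.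
case E: (parent_path w) => [u|] //=.
rewrite (index_map cons0_inj) eqseq_cons eqxx /= eq_sym.
by rewrite (negbTE (pverts_nonnil (parent_path_mem w_in E))).
Qed.

Lemma iota_pf_cons ts g :
  iota_pf (PNode ts :: g) = oprod (None :: map under_root (iota_pf ts)) (iota_pf g).
Proof. by rewrite -iota_pf_node -iota_pf_cat. Qed.

Lemma iota_pf_eq_nil f : (iota_pf f == [::]) = (f == [::]).
Proof. by rewrite -size_eq0 size_iota_pf size_eq0 pverts_eq_nil. Qed.

Lemma head_iota_pf f : head None (iota_pf f) = None.
Proof. by case: f => [|[ts] g] //; rewrite iota_pf_cons. Qed.

(* The label of the second root of [iota_pf (PNode ts :: g)] is the size of
   [ts] plus one; this is what makes [iota_pf] injective. *)
Lemma find_next_root p q c : head None q = None ->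
  find (pred1 None) (map under_root p ++ map (omap (addn c)) q) = size p.
Proof.
move=> q_head; rewrite find_cat ifF ?size_map; last by apply/hasP=> -[_ /mapP[x _ ->]].
by case: q q_head => [|[] q] //= _; rewrite addn0.
Qed.

Lemma iota_pf_inj : injective iota_pf.
Proof.
have shift_inj c : injective (omap (addn c)) by move=> [a|] [b|] //= [] /addnI->.
elim/pforest_ind=> [|ts g IHts IHg] [|[us] g'] //;
  try by move/eqP; rewrite ?iota_pf_eq_nil // eq_sym iota_pf_eq_nil.
rewrite !iota_pf_cons /oprod /= => -[eq_tail].
have eq_size : size (pverts ts) = size (pverts us).
  rewrite -!size_iota_pf.
  rewrite -(find_next_root _ (size (map under_root (iota_pf ts))).+1 (head_iota_pf g)).
  by rewrite eq_tail find_next_root ?head_iota_pf.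
move: eq_tail; rewrite !size_map eq_size => /eqP.
rewrite eqseq_cat ?size_map ?eq_size // => /andP[/eqP eq_ts /eqP eq_g].
by rewrite (IHts _ (inj_map under_root_inj eq_ts)) (IHg _ (inj_map (shift_inj _) eq_g)).
Qed.

(** * Subforests induced on convex vertex sets *)

Definition ancestor_convex (keep : pred (seq nat)) :=
  forall v u k, parent_path v = Some u -> (0 < k < size v)%N ->
  keep v -> keep (take k v) -> keep u.

Definition kept_parent (keep : pred (seq nat)) (v : seq nat) : option (seq nat) :=
  if parent_path v is Some u then (if keep u then Some u else None) else None.

Lemma ancestor_convex_cons0 keep :
  ancestor_convex keep -> ancestor_convex (fun p => keep (0%N :: p)).
Proof.
move=> convex v u k parent_vu /andP[_ lt_kv].
apply: (convex (0%N :: v) (0%N :: u) k.+1).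
  by rewrite parent_path_cons ?parent_vu //; case: (v) lt_kv.
by rewrite /= ltnS lt_kv.
Qed.

Lemma ancestor_convex_shift keep :
  ancestor_convex keep -> ancestor_convex (fun p => keep (shift_root 1 p)).
Proof.
move=> convex v u k parent_vu lt_k keep_v keep_k.
apply: (convex (shift_root 1 v) (shift_root 1 u) k) => //.
- by rewrite parent_path_shift parent_vu.
- by case: (v) lt_k.
- by rewrite take_shift_root.
Qed.

Lemma kept_parent_nonnil keep v u : kept_parent keep v = Some u -> u != [::].
Proof.
rewrite /kept_parent; case E: (parent_path v) => [w|] //.
by case: ifP => // _ [<-]; apply: parent_path_nonnil E.
Qed.

Lemma kept_parent_shift keep w : kept_parent keep (shift_root 1 w) =
  omap (shift_root 1) (kept_parent (fun p => keep (shift_root 1 p)) w).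
Proof.
by rewrite /kept_parent parent_path_shift; case: parent_path => //= u; case: keep.
Qed.

Section ConsRelabel.

Variables (keep : pred (seq nat)) (n : nat) (psi0 psi1 : seq nat -> seq nat).

(* The relabelling of kept vertices for [pinduced (PNode ts :: g) keep], built
   from those ([psi0], [psi1]) for the induced subforests of [ts] and [g];
   [n] is the number of trees contributed by [PNode ts]. *)
Definition cons_relabel (v : seq nat) : seq nat :=
  match v with
  | [:: 0] => [:: 0%N]
  | 0 :: u => if keep [:: 0%N] then 0%N :: psi0 u else psi0 u
  | i.+1 :: u => shift_root n (psi1 (i :: u))
  | [::] => [::]
  end.
Arguments cons_relabel : simpl never.

Lemma cons_relabel_cons0 u : u != [::] ->
  cons_relabel (0%N :: u) = if keep [:: 0%N] then 0%N :: psi0 u else psi0 u.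
Proof. by case: u. Qed.

Lemma cons_relabel_shift w : w != [::] ->
  cons_relabel (shift_root 1 w) = shift_root n (psi1 w).
Proof. by case: w. Qed.

Lemma parent_cons_relabel_cons0 u :
  ancestor_convex keep -> u != [::] -> psi0 u != [::] -> keep (0%N :: u) ->
  parent_path (psi0 u) = omap psi0 (kept_parent (fun p => keep (0%N :: p)) u) ->
  parent_path (cons_relabel (0%N :: u)) =
  omap cons_relabel (kept_parent keep (0%N :: u)).
Proof.
move=> convex u_nonnil psi0u_nonnil keep_u.
rewrite cons_relabel_cons0 // /kept_parent (parent_path_cons _ u_nonnil).
case: (boolP (keep [:: 0%N])) => keep_root; last first.
  case E: (parent_path u) => [w|] /= ->; last by rewrite (negbTE keep_root).
  case: ifP => //= _.
  by rewrite cons_relabel_cons0 ?(negbTE keep_root) ?(parent_path_nonnil E).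
rewrite parent_path_cons //.
case E: (parent_path u) => [w|] /= ->; last by rewrite keep_root.
have keep_w : keep (0%N :: w).
  apply: (convex (0%N :: u) _ 1 _ _ keep_u).
  - by rewrite parent_path_cons ?E.
  - by rewrite /= ltnS lt0n size_eq0.
  - by rewrite /= take0.
by rewrite keep_w /= cons_relabel_cons0 ?(parent_path_nonnil E) ?keep_root.
Qed.

Lemma parent_cons_relabel_shift w : w != [::] ->
  parent_path (psi1 w) =
    omap psi1 (kept_parent (fun p => keep (shift_root 1 p)) w) ->
  parent_path (cons_relabel (shift_root 1 w)) =
  omap cons_relabel (kept_parent keep (shift_root 1 w)).
Proof.
move=> w_nonnil parent_w; rewrite cons_relabel_shift // parent_path_shift parent_w.
rewrite kept_parent_shift; case E: kept_parent => [z|] //=.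
by rewrite cons_relabel_shift ?(kept_parent_nonnil E).
Qed.

End ConsRelabel.

Lemma pverts_pinduced f keep : ancestor_convex keep -> exists psi,
  pverts (pinduced f keep) = map psi (filter keep (pverts f)) /\
  {in filter keep (pverts f), forall v,
     parent_path (psi v) = omap psi (kept_parent keep v)}.
Proof.
elim/pforest_ind: f keep => [|ts g IHts IHg] keep convex; first by exists id.
set keep0 := fun p => keep (0%N :: p); set keep1 := fun p => keep (shift_root 1 p).
have [psi0 [pverts0 parent0]] := IHts keep0 (ancestor_convex_cons0 convex).
have [psi1 [pverts1 parent1]] := IHg keep1 (ancestor_convex_shift convex).
set F0 := filter keep0 (pverts ts) in pverts0 parent0 *.
set F1 := filter keep1 (pverts g) in pverts1 parent1 *.
have F0_nonnil u : u \in F0 -> u != [::] := @mem_filter_pverts_nonnil _ _ u.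
have F1_nonnil w : w \in F1 -> w != [::] := @mem_filter_pverts_nonnil _ _ w.
set A := if keep [:: 0%N] then [:: PNode (pinduced ts keep0)] else pinduced ts keep0.
set psi := cons_relabel keep (size A) psi0 psi1.
have map_cons0 : map psi (map (cons 0%N) F0) =
                 map (fun u => if keep [:: 0%N] then 0%N :: psi0 u else psi0 u) F0.
  by rewrite -map_comp; apply/eq_in_map => u /F0_nonnil; exact: cons_relabel_cons0.
have map_shift :
    map psi (map (shift_root 1) F1) = map (shift_root (size A)) (map psi1 F1).
  by rewrite -!map_comp; apply/eq_in_map => w /F1_nonnil; exact: cons_relabel_shift.
exists psi; rewrite pinduced_cons -/A pverts_cat pverts_cons /= filter_cat !filter_map.
split.
  rewrite pverts1 -map_shift /A; case: ifP => keep_root.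
    by rewrite pverts_cons /= cats0 map_cat map_cons0 keep_root pverts0 -map_comp.
  by rewrite map_cat map_cons0 keep_root pverts0.
have parent_cons0 u : u \in F0 -> parent_path (psi (0%N :: u)) =
                                   omap psi (kept_parent keep (0%N :: u)).
  move=> u_F0; apply: parent_cons_relabel_cons0 => //.
  - exact: F0_nonnil.
  - by apply: (@pverts_nonnil (pinduced ts keep0)); rewrite pverts0 map_f.
  - by move: u_F0; rewrite mem_filter => /andP[].
  - exact: parent0.
have parent_shift w : w \in F1 -> parent_path (psi (shift_root 1 w)) =
                                   omap psi (kept_parent keep (shift_root 1 w)).
  by move=> w_F1; apply: parent_cons_relabel_shift; rewrite ?F1_nonnil ?parent1.
move=> v; case: ifP => keep_root; rewrite ?inE mem_cat.
  by case/or3P=> [/eqP->|/mapP[u /parent_cons0 ? ->]|/mapP[w /parent_shift ? ->]].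
by case/orP=> [/mapP[u /parent_cons0 ? ->]|/mapP[w /parent_shift ? ->]].
Qed.

Lemma iota_pf_pinduced f keep : ancestor_convex keep ->
  iota_pf (pinduced f keep) =
  oinduced (iota_pf f) (fun j => keep (nth [::] (pverts f) j)).
Proof.
move=> convex; have [psi [pverts_psi parent_psi]] := pverts_pinduced f convex.
set vs := pverts f in parent_psi pverts_psi *.
set K := filter keep vs in parent_psi pverts_psi *.
have uniq_psiK : uniq (map psi K) by rewrite -pverts_psi pverts_uniq.
have K_nth : K = map (nth [::] vs) (filter (keep \o nth [::] vs) (iota 0 (size vs))).
  by rewrite /K -{1}(mkseq_nth [::] vs) /mkseq filter_map.
rewrite iota_pfE pverts_psi -map_comp /oinduced size_iota_pf -/vs {2}K_nth -map_comp.
apply/eq_in_map => j; rewrite mem_filter mem_iota add0n => /and3P[/= keep_j _ lt_j] /=.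
set v := nth [::] vs j in keep_j *.
have v_K : v \in K by rewrite mem_filter keep_j mem_nth.
rewrite parent_psi // (nth_iota_pf lt_j) -/vs -/v /kept_parent.
case E: (parent_path v) => [u|] //=.
have u_in : u \in vs by apply: parent_path_mem E; apply: mem_nth.
rewrite nth_index //; case keep_u: (keep u) => //=; congr Some.
have u_K : u \in K by rewrite mem_filter keep_u.
rewrite index_map_in // /K index_filter // -(map_nth_iota0 [::]) ?count_map //.
by rewrite ltnW // index_mem.
Qed.

(** * Admissible cuts *)

Lemma p_inLea_prefix V u v : prefix u v -> p_inLea V u -> p_inLea V v.
Proof.
move=> pre_uv /hasP[w w_V pre_wu]; apply/hasP.
by exists w; rewrite ?(prefix_trans pre_wu).
Qed.

Lemma ancestor_convex_inLea V : ancestor_convex (p_inLea V).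
Proof.
move=> v u k; rewrite /parent_path; case: ifP => // _ [<-] /andP[_ lt_kv] _.
apply: p_inLea_prefix; rewrite -(@take_takel _ k (size v).-1) ?prefix_take //.
by rewrite -ltnS prednK // (leq_ltn_trans _ lt_kv).
Qed.

Lemma ancestor_convex_notinLea V : ancestor_convex (fun p => ~~ p_inLea V p).
Proof.
move=> v u k; rewrite /parent_path; case: ifP => // _ [<-] _ notin_v _.
by apply: contra notin_v; apply: p_inLea_prefix; apply: prefix_take.
Qed.

Section AdmissibleCut.

Variables (f : pforest) (m : bitseq).
Local Notation vs := (pverts f).

Lemma mem_mask_pverts v : (v \in mask m vs) = (v \in vs) && nth false m (index v vs).
Proof. by rewrite in_mask // pverts_uniq. Qed.

Lemma nth_mem_mask_pverts i : (i < size vs)%N ->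
  (nth [::] vs i \in mask m vs) = nth false m i.
Proof. by move=> lt_i; rewrite mem_mask_pverts mem_nth // index_uniq ?pverts_uniq. Qed.

Lemma o_admissible_iota_pf : o_admissible (iota_pf f) m = p_admissible (mask m vs).
Proof.
rewrite /o_admissible /p_admissible size_iota_pf; apply/allP/allP => adm.
  move=> v; rewrite mem_mask_pverts => /andP[v_in m_v]; apply/allP => w.
  rewrite mem_mask_pverts => /andP[w_in m_w].
  have := adm (index v vs); rewrite mem_iota add0n index_mem v_in => /(_ isT) /allP.
  move=> /(_ (index w vs)); rewrite mem_iota add0n index_mem w_in => /(_ isT).
  by rewrite oanc_iota_pf ?index_mem // !nth_index // m_v m_w.
move=> i; rewrite mem_iota add0n => /andP[_ lt_i]; apply/allP => j.
rewrite mem_iota add0n => /andP[_ lt_j]; rewrite oanc_iota_pf //.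
rewrite -!nth_mem_mask_pverts //; apply/negP => /andP[/andP[i_V j_V] pre_ij].
by have /allP/(_ _ j_V) := adm _ i_V; rewrite pre_ij.
Qed.

Lemma o_inLea_iota_pf i : (i < size vs)%N ->
  o_inLea (iota_pf f) m i = p_inLea (mask m vs) (nth [::] vs i).
Proof.
move=> lt_i; rewrite /o_inLea /p_inLea size_iota_pf; apply/idP/idP.
  case/orP=> [m_i|/hasP[a]].
    by apply/hasP; exists (nth [::] vs i); rewrite ?prefix_refl ?nth_mem_mask_pverts.
  rewrite mem_iota add0n => /andP[_ lt_a] /andP[m_a].
  rewrite oanc_iota_pf // => /andP[pre_ai _].
  by apply/hasP; exists (nth [::] vs a); rewrite ?nth_mem_mask_pverts.
case/hasP=> v; rewrite mem_mask_pverts => /andP[v_in m_v] pre_v.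
have [eq_v|neq_v] := eqVneq v (nth [::] vs i).
  by move: m_v; rewrite eq_v index_uniq ?pverts_uniq // => ->.
apply/orP; right; apply/hasP; exists (index v vs); first by rewrite mem_iota index_mem.
by rewrite m_v oanc_iota_pf ?index_mem // nth_index // pre_v.
Qed.

End AdmissibleCut.

Lemma oinduced_iota_pf_ext f (S S' : pred nat) :
  {in gtn (size (pverts f)), S =1 S'} ->
  oinduced (iota_pf f) S = oinduced (iota_pf f) S'.
Proof.
move=> eq_S; rewrite /oinduced size_iota_pf.
rewrite (@eq_in_filter _ S S') => [|j]; last by rewrite mem_iota => /andP[_ /eq_S].
apply/eq_in_map => j; rewrite mem_filter mem_iota add0n => /and3P[_ _ lt_j].
rewrite nth_iota_pf //; case E: parent_path => [u|] //=.
have u_in : u \in pverts f by apply: parent_path_mem E; apply: mem_nth.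
have lt_u : (index u (pverts f) < size (pverts f))%N by rewrite index_mem.
rewrite eq_S //; congr (if _ then Some _ else _).
apply: eq_in_count => k; rewrite mem_iota add0n => /andP[_ lt_k].
by apply: eq_S; apply: ltn_trans lt_u.
Qed.

Lemma ocoprod_iota_pf f : ocoprod (iota_pf f) = map (tensor_map iota_pf) (pcoprod f).
Proof.
rewrite /ocoprod /pcoprod size_iota_pf filter_map -!map_comp.
rewrite (eq_in_filter (fun m _ => o_admissible_iota_pf f m)).
apply/eq_in_map => m _; rewrite /tensor_map /= !iota_pf_pinduced.
- by congr pair; apply: oinduced_iota_pf_ext => j lt_j; rewrite /= o_inLea_iota_pf.
- exact: ancestor_convex_inLea.
- exact: ancestor_convex_notinLea.
Qed.

Import GRing.Theory.
Local Open Scope ring_scope.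

Section LinearExtension.

Variables (K : nmodType) (A B : eqType) (h : A -> B).

Lemma coef_lmap (v : lc K A) b : coef (lmap h v) b = \sum_(x <- v | h x.2 == b) x.1.
Proof. by rewrite /coef /lmap big_map. Qed.

Lemma coef_lmap_support (v : lc K A) (S : seq A) b :
  uniq S -> {subset map snd v <= S} ->
  coef (lmap h v) b = \sum_(a <- S | h a == b) coef v a.
Proof.
move=> uniq_S; rewrite coef_lmap; elim: v => [|y v IH] sub_S.
  by rewrite big_nil big1 // => a _; rewrite /coef big_nil.
have y_S : y.2 \in S by apply: sub_S; rewrite inE eqxx.
rewrite big_cons IH => [|a a_v]; last by apply: sub_S; rewrite inE a_v orbT.
rewrite /coef [RHS](eq_bigr (fun a => (if y.2 == a then y.1 else 0) +
                                  \sum_(x <- v | x.2 == a) x.1)); last first.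
  by move=> a _; rewrite big_cons; case: ifP; rewrite ?add0r.
rewrite big_split /=; case: ifP => hy_b; last first.
  rewrite [X in _ = X + _]big1 ?add0r // => a h_a.
  by case: eqVneq => // eq_ya; move: hy_b; rewrite eq_ya h_a.
congr (_ + _); rewrite big_mkcond (bigD1_seq y.2) //= eqxx hy_b big1 ?addr0 // => a.
by case: ifP => // _; case: eqVneq => // ->; rewrite eqxx.
Qed.

Lemma coef_lmap_eq (v w : lc K A) :
  coef v =1 coef w -> coef (lmap h v) =1 coef (lmap h w).
Proof.
move=> eq_vw b; set S := undup (map snd (v ++ w)).
have sub_v : {subset map snd v <= S}.
  by move=> a a_v; rewrite mem_undup map_cat mem_cat a_v.
have sub_w : {subset map snd w <= S}.
  by move=> a a_w; rewrite mem_undup map_cat mem_cat a_w orbT.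
rewrite !(@coef_lmap_support _ S) ?undup_uniq //.
by apply: eq_bigr => a _; rewrite eq_vw.
Qed.

Lemma coef_lmap_inj (v : lc K A) a : injective h -> coef (lmap h v) (h a) = coef v a.
Proof. by move=> inj_h; rewrite coef_lmap; apply: eq_bigl => x; rewrite inj_eq. Qed.

End LinearExtension.

Lemma lcoprod_lmap (K A B : Type) (h : A -> B)
    (DA : A -> seq (A * A)) (DB : B -> seq (B * B)) (v : lc K A) :
  (forall a, DB (h a) = map (tensor_map h) (DA a)) ->
  lcoprod DB (lmap h v) = lmap (tensor_map h) (lcoprod DA v).
Proof.
move=> hD; elim: v => [|x v IH] //=.
by move: IH; rewrite /lcoprod /lmap /= !map_cat => ->; rewrite hD -!map_comp.
Qed.

Lemma lmap_lmul (K : pzSemiRingType) (A B : Type) (h : A -> B)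
    (mulA : A -> A -> A) (mulB : B -> B -> B) (v w : lc K A) :
  {morph h : a b / mulA a b >-> mulB a b} ->
  lmap h (lmul mulA v w) = lmul mulB (lmap h v) (lmap h w).
Proof.
move=> h_mul; elim: v => [|x v IH] //=.
move: IH; rewrite /lmul /lmap /= !map_cat => ->; congr (_ ++ _).
by rewrite -!map_comp; apply: eq_map => y /=; rewrite h_mul.
Qed.

Lemma lcounit_lmap (K : pzSemiRingType) (A B : Type) (h : A -> B)
    (epsA : A -> bool) (epsB : B -> bool) (v : lc K A) :
  epsB \o h =1 epsA -> lcounit epsB (lmap h v) = lcounit epsA v.
Proof.
by move=> h_eps; rewrite /lcounit big_map; apply: eq_bigr => x _; rewrite /= -h_eps.
Qed.

Theorem mainTheorem5 (K : fieldType) :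
  (forall f : pforest, ovalid (iota_pf f)) /\
  (forall (v w : lc K pforest),
      (forall f, coef v f = coef w f) ->
      forall p, coef (lmap iota_pf v) p = coef (lmap iota_pf w) p) /\
  (forall v : lc K pforest,
      (forall p, coef (lmap iota_pf v) p = 0) -> forall f, coef v f = 0) /\
  (forall (v w : lc K pforest) (p : oforest),
      coef (lmap iota_pf (lmul pprod v w)) p =
      coef (lmul oprod (lmap iota_pf v) (lmap iota_pf w)) p) /\
  (forall p : oforest,
      coef (lmap iota_pf (lunit K ([::] : pforest))) p =
      coef (lunit K ([::] : oforest)) p) /\
  (forall (v : lc K pforest) (pq : oforest * oforest),
      coef (lcoprod ocoprod (lmap iota_pf v)) pq =
      coef (lmap (tensor_map iota_pf) (lcoprod pcoprod v)) pq) /\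
  (forall v : lc K pforest,
      lcounit ocounit (lmap iota_pf v) = lcounit pcounit v).
Proof.
split; first exact: ovalid_iota_pf.
split; first exact: coef_lmap_eq.
split; first by move=> v v0 f; rewrite -(coef_lmap_inj _ _ iota_pf_inj) v0.
split; first by move=> v w p; rewrite (lmap_lmul _ _ iota_pf_cat).
split; first by [].
split; first by move=> v pq; rewrite (lcoprod_lmap _ ocoprod_iota_pf).
by move=> v; apply: lcounit_lmap => f; rewrite /= /ocounit /pcounit iota_pf_eq_nil.
Qed.
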